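(* Let $T$ be a tree which is not barren and such that for every vertex $v$ of $T$ the set $\{t(a): a \text{ an arrow with } s(a)=v\}$ is finite. Then $T$ is not a source injective representation quiver.
   Context: A quiver is a directed graph with arrows $a$ having source $s(a)$ and target $t(a)$; a path is a finite composable sequence of arrows. A tree is a quiver $T$ with a vertex $r$ (the root) such that for every vertex $w$ there is a unique path from $r$ to $w$. The $i$-th stage of $T$ consists of the vertices whose path from the root has length $i$. $T$ is barren if the number $n_i$ of vertices in the $i$-th stage is finite for every $i$ and the sequence $n_1,n_2,\dots$ is eventually constant. A representation $X$ of a quiver $Q$ in $R\text{-Mod}$ assigns a left $R$-module $X(v)$ to each vertex and an $R$-linear map $X(a):X(s(a))\to X(t(a))$ to each arrow. A quiver $Q$ is a source injective representation quiver if for every ring $R$, a representation $X$ of $Q$ in $R\text{-Mod}$ is injective (in the category of representations) if and only if (i) $X(v)$ is an injective $R$-module for every vertex $v$, and (ii) for every vertex $v$ the map $X(v)\to\prod_{s(a)=v}X(t(a))$ induced by the maps $X(a)$ is a split epimorphism. *)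

From HB Require Import structures.
From mathcomp Require Import all_boot all_algebra.
Set Implicit Arguments. Unset Strict Implicit. Unset Printing Implicit Defensive.
Import GRing.Theory.
Local Open Scope ring_scope.

Section Quivers.
Variables (V A : Type) (s t : A -> V).

Fixpoint is_path (u : V) (p : seq A) (w : V) : Prop :=
  match p with
  | [::] => u = w
  | a :: p' => s a = u /\ is_path (t a) p' w
  end.

Definition is_root (r : V) : Prop :=
  forall w : V, exists! p : seq A, is_path r p w.

Definition is_tree : Prop := exists r : V, is_root r.

Definition has_card (P : V -> Prop) (n : nat) : Prop :=
  exists f : 'I_n -> V, injective f /\ (forall w, P w <-> exists i, f i = w).

Definition finite_pred (P : V -> Prop) : Prop := exists n, has_card P n.

Definition stage (r : V) (i : nat) (w : V) : Prop :=
  exists p : seq A, is_path r p w /\ size p = i.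

Definition barren (r : V) : Prop :=
  exists n : nat -> nat,
    (forall i, has_card (stage r i) (n i)) /\
    exists N c, forall i, (N <= i)%N -> n i = c.

Definition locally_finite : Prop :=
  forall v : V, finite_pred (fun w => exists a, s a = v /\ t a = w).

Record rep (R : nzRingType) := Rep {
  rep_mod : V -> lmodType R;
  rep_map : forall a : A, {linear rep_mod (s a) -> rep_mod (t a)}
}.

Definition is_rep_morph (R : nzRingType) (Y Z : rep R)
  (f : forall v, {linear rep_mod Y v -> rep_mod Z v}) : Prop :=
  forall (a : A) (y : rep_mod Y (s a)),
    f (t a) (rep_map Y a y) = rep_map Z a (f (s a) y).

(* Injective object in the category of representations (monomorphisms
   are the morphisms which are injective at every vertex). *)
Definition rep_injective (R : nzRingType) (X : rep R) : Prop :=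
  forall (Y Z : rep R) (f : forall v, {linear rep_mod Y v -> rep_mod Z v})
         (g : forall v, {linear rep_mod Y v -> rep_mod X v}),
    is_rep_morph f -> (forall v, injective (f v)) -> is_rep_morph g ->
    exists h : forall v, {linear rep_mod Z v -> rep_mod X v},
      is_rep_morph h /\ forall v (y : rep_mod Y v), h v (f v y) = g v y.

(* The product prod_{s(a)=v} X(t(a)) is represented by dependent functions
   on {a | s a = v}; the map X(v) -> product is x |-> (a |-> X(a) x).
   Split epimorphism: it has an R-linear right inverse. *)
Definition out_split_epi (R : nzRingType) (X : rep R) (v : V) : Prop :=
  exists sec : (forall a : {a : A | s a = v}, rep_mod X (t (sval a))) -> rep_mod X v,
    (forall (r : R) (F G : forall a : {a : A | s a = v}, rep_mod X (t (sval a))),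
        sec (fun a => r *: F a + G a) = r *: sec F + sec G) /\
    (forall (F : forall a : {a : A | s a = v}, rep_mod X (t (sval a)))
            (a : {a : A | s a = v}),
        rep_map X (sval a) (eq_rect_r (fun u => rep_mod X u) (sec F) (svalP a))
          = F a).

End Quivers.

Definition module_injective (R : nzRingType) (E : lmodType R) : Prop :=
  forall (M N : lmodType R) (i : {linear M -> N}) (g : {linear M -> E}),
    injective i -> exists h : {linear N -> E}, forall m, h (i m) = g m.

Definition source_injective_rep_quiver (V A : Type) (s t : A -> V) : Prop :=
  forall (R : nzRingType) (X : rep s t R),
    rep_injective X <->
    ((forall v, module_injective (rep_mod X v)) /\ (forall v, out_split_epi X v)).

(* Every vector space is an injective module, so over a field condition (i) is
   automatic and it suffices to exhibit a representation X satisfying (ii) that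
   is not injective.  Let X(v) consist of the functions on the descendants of v
   whose support has bounded depth, with restriction along arrows.  Since each
   vertex has finitely many children, compatible functions on the subtrees of
   the children glue with a common depth bound, which splits (ii).
   If the tree is not barren then branching vertices occur at arbitrary depth
   (otherwise the stage sizes are eventually nonincreasing, hence eventually
   constant), and a Koenig argument gives a ray from the root whose off-ray
   children S form an antichain of unbounded depth.  A morphism from the
   constant representation K^2 with arrows (z1, z2) |-> (z1, 0) into X is
   constant along paths at (1, 0); extending the map that sends the generator
   at w in S to the indicator of w would make the value at the root equal to 1
   on all of S, contradicting bounded depth. *)

From HB Require Import structures.
From mathcomp Require Import all_boot all_algebra.
From mathcomp Require Import boolp classical_sets functions.
Set Implicit Arguments. Unset Strict Implicit. Unset Printing Implicit Defensive.
Import GRing.Theory.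
Local Open Scope ring_scope.
Local Open Scope classical_set_scope.

Definition mk_linear (R : pzRingType) (U W : lmodType R) (f : U -> W) (fL : linear f) :
  {linear U -> W} := HB.pack f (GRing.isLinear.Build R U W *:%R f fL).

Section FieldModuleInjective.
Variables (K : fieldType) (M N : lmodType K) (i : {linear M -> N}).
Hypothesis i_inj : injective i.

Definition lin_closed (C : set N) := forall a x y, C x -> C y -> C (a *: x + y).

Definition image_transversal (C : set N) :=
  lin_closed C /\ forall m, C (i m) -> i m = 0.

Lemma max_image_transversal_exists :
  exists C, image_transversal C /\ forall B, C `<` B -> ~ image_transversal B.
Proof.
apply: Zorn_bigcup => F FT Ftot; split.
- move=> a x y [X FX Xx] [Y FY Yy].
  have [XY|YX] := Ftot _ _ FX FY.
  + by exists Y => //; apply: (FT _ FY).1 => //; apply: XY.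
  + by exists X => //; apply: (FT _ FX).1 => //; apply: YX.
- by move=> m [X FX Xm]; apply: (FT _ FX).2.
Qed.

Variable C : set N.
Hypotheses (C_transversal : image_transversal C)
  (C_max : forall B, C `<` B -> ~ image_transversal B).

Lemma max_image_transversal0 : C 0.
Proof.
apply: contrapT => C0; apply: (C_max (B := [set 0])); last first.
  by split=> [a x y -> ->|//]; rewrite scaler0 addr0.
split=> [x Cx|/(_ 0 erefl)//]; exfalso; apply: C0.
by rewrite -(addNr x) -scaleN1r; apply: C_transversal.1.
Qed.

Lemma max_image_transversal_complement n : exists m c, C c /\ n = i m + c.
Proof.
apply: contrapT => n_out; have [C_lin C_cap] := C_transversal.
pose B := [set c + l *: n | c in C & l in [set: K]].
apply: (C_max (B := B)); split.
- by move=> c Cc; exists c => //; exists 0 => //; rewrite scale0r addr0.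
- move=> /(_ n) Cn; apply: n_out; exists 0, n; rewrite linear0 add0r; split => //.
  apply: Cn; exists 0; first exact: max_image_transversal0.
  by exists 1 => //; rewrite add0r scale1r.
- move=> a _ _ [c1 Cc1 [l1 _ <-]] [c2 Cc2 [l2 _ <-]].
  exists (a *: c1 + c2); first exact: C_lin.
  by exists (a * l1 + l2) => //; rewrite scalerDr scalerDl scalerA addrACA.
move=> m [c Cc [l _ Em]]; have [l0|l0] := eqVneq l 0.
  by apply: C_cap; rewrite -Em l0 scale0r addr0.
exfalso; apply: n_out; exists (l^-1 *: m), (- l^-1 *: c); split.
  by rewrite -[_ *: c]addr0; apply: C_lin => //; apply: max_image_transversal0.
by rewrite linearZ /= -Em scalerDr scalerA mulVf // scale1r scaleNr addrC addKr.
Qed.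

Lemma max_image_transversal_decomp_uniq m1 m2 c1 c2 :
  C c1 -> C c2 -> i m1 + c1 = i m2 + c2 -> m1 = m2.
Proof.
move=> Cc1 Cc2 Em; apply: i_inj; apply/eqP; rewrite -subr_eq0 -linearB; apply/eqP.
apply: C_transversal.2; rewrite linearB /=.
have -> : i m1 - i m2 = - c1 + c2.
  by rewrite -(addrK c1 (i m1)) Em addrAC [i m2 + _]addrC addrK addrC.
by rewrite -scaleN1r; apply: C_transversal.1.
Qed.

Definition transversal_proj n := projT1 (cid (max_image_transversal_complement n)).

Lemma transversal_projE m c : C c -> transversal_proj (i m + c) = m.
Proof.
move=> Cc; have [c' [Cc' Ec']] := projT2 (cid (max_image_transversal_complement (i m + c))).
by apply: (max_image_transversal_decomp_uniq Cc' Cc); rewrite -Ec'.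
Qed.

Lemma transversal_proj_linear : linear transversal_proj.
Proof.
move=> a x y; have [cx [Cx Ex]] := projT2 (cid (max_image_transversal_complement x)).
have [cy [Cy Ey]] := projT2 (cid (max_image_transversal_complement y)).
rewrite {1}Ex {1}Ey scalerDr addrACA -linearP transversal_projE //.
exact: C_transversal.1.
Qed.

End FieldModuleInjective.

Lemma lmod_field_injective (K : fieldType) (E : lmodType K) : module_injective E.
Proof.
move=> M N i g i_inj; have [C [C_transversal C_max]] := max_image_transversal_exists i.
have projL := transversal_proj_linear i_inj C_transversal C_max.
have hL : linear (g \o transversal_proj C_transversal C_max).
  by move=> a x y; rewrite /= projL linearP.
exists (mk_linear hL) => m /=.
rewrite -[i m]addr0 transversal_projE //.
exact: (max_image_transversal0 C_transversal C_max).
Qed.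

Section Paths.
Variables (V A : Type) (s t : A -> V).
Local Notation path := (is_path s t).

Lemma is_path_cat u p w q z : path u p w -> path w q z -> path u (p ++ q) z.
Proof. by elim: p u => [|a p IH] u /= => [->|[sa pw] qz]; [|split; last exact: IH]. Qed.

Lemma is_path_rcons u p a z : path u (rcons p a) z <-> path u p (s a) /\ t a = z.
Proof.
elim: p u => [|b p IH] u /=; first by split=> [[-> ->]|[-> ->]].
by rewrite IH; split=> [[? []]|[[]]].
Qed.

Definition descendant u w := exists p, path u p w.

Lemma descendant_refl u : descendant u u. Proof. by exists [::]. Qed.

Lemma descendant_trans u v w : descendant u v -> descendant v w -> descendant u w.
Proof. by move=> [p up] [q vq]; exists (p ++ q); apply: is_path_cat up vq. Qed.

Lemma descendant_arrow a w : descendant (t a) w -> descendant (s a) w.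
Proof. by move=> [p tp]; exists (a :: p). Qed.

Lemma descendant_target a : descendant (s a) (t a).
Proof. by exists [:: a]. Qed.

End Paths.

Section RootedTree.
Variables (V A : Type) (s t : A -> V) (r : V).
Hypothesis r_root : is_root s t r.
Local Notation path := (is_path s t).
Local Notation descendant := (descendant s t).

Lemma root_path_exists w : exists p, path r p w.
Proof. by have [p [rp _]] := r_root w; exists p. Qed.

Lemma root_path_uniq p q w : path r p w -> path r q w -> p = q.
Proof. by move=> rp rq; have [p0 [_ p0U]] := r_root w; rewrite -(p0U _ rp) -(p0U _ rq). Qed.

Lemma path_uniq v p q w : path v p w -> path v q w -> p = q.
Proof.
move=> vp vq; have [p0 rp0] := root_path_exists v.
have := root_path_uniq (is_path_cat rp0 vp) (is_path_cat rp0 vq).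
by elim: p0 {rp0} => //= a p0 IH [].
Qed.

Lemma not_descendant_source a : ~ descendant (t a) (s a).
Proof.
move=> [p tp]; have ap : path (s a) (a :: p) (s a) by [].
have a0 : path (s a) [::] (s a) by [].
by have := path_uniq ap a0.
Qed.

Lemma arrow_eq_of_descendant a b x :
  s a = s b -> descendant (t a) x -> descendant (t b) x -> a = b.
Proof.
move=> sab [p tp] [q tq].
have ap : path (s a) (a :: p) x by [].
have bq : path (s a) (b :: q) x by rewrite /= sab.
by case: (path_uniq ap bq).
Qed.

End RootedTree.

Lemma nonincreasing_eventually_constant (f : nat -> nat) D :
  (forall i, (D <= i)%N -> (f i.+1 <= f i)%N) -> exists N c, forall i, (N <= i)%N -> f i = c.
Proof.
move=> f_dec.
have f_mono i j : (D <= i)%N -> (i <= j)%N -> (f j <= f i)%N.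
  move=> Di; elim: j => [|j IH]; first by rewrite leqn0 => /eqP ->.
  rewrite leq_eqVlt => /orP [/eqP <-//|ij].
  by apply: leq_trans (f_dec j (leq_trans Di ij)) (IH ij).
have attained : exists m, `[< exists i, (D <= i)%N /\ f i = m >].
  by exists (f D); apply/asboolP; exists D.
case: (ex_minnP attained) => m /asboolP [i0 [Di0 fi0]] m_min.
exists i0, m => i i0i; apply/eqP; rewrite eqn_leq -{1}fi0 f_mono //=.
by apply: m_min; apply/asboolP; exists i; split => //; apply: leq_trans i0i.
Qed.

Lemma has_card_uniq (T : eqType) (P : T -> Prop) (l : seq T) (x0 : T) :
  uniq l -> (forall w, w \in l <-> P w) -> has_card P (size l).
Proof.
move=> l_uniq lP; exists (fun j => nth x0 l j); split.
  move=> j k /= jk; apply: val_inj; apply/eqP.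
  by rewrite -(nth_uniq x0 (ltn_ord j) (ltn_ord k) l_uniq) jk.
move=> w; split => [/lP wl|[j <-]]; last by apply/lP; apply: mem_nth.
have wi : (index w l < size l)%N by rewrite index_mem.
by exists (Ordinal wi); apply: nth_index.
Qed.

Section LocallyFiniteTree.
Variables (V A : Type) (s t : A -> V) (r : V).
Hypothesis s_lf : locally_finite s t.
Local Notation path := (is_path s t).

Definition branching (w : V) := exists a b, s a = w /\ s b = w /\ t a <> t b.

Lemma children_exists v : exists l : seq {classic V},
  uniq l /\ forall w, w \in l <-> exists a, s a = v /\ t a = w.
Proof.
have [n [e [e_inj eP]]] := s_lf v.
exists (map e (enum 'I_n)); rewrite map_inj_uniq ?enum_uniq //; split => // w.
split=> [/mapP [j _ ->]|/eP [j <-]]; first by apply/eP; exists j.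
by apply: map_f; rewrite mem_enum.
Qed.

Definition children (v : {classic V}) := projT1 (cid (children_exists v)).

Lemma children_uniq v : uniq (children v).
Proof. exact: (projT2 (cid (children_exists v))).1. Qed.

Lemma mem_children v w : w \in children v <-> exists a, s a = v /\ t a = w.
Proof. exact: (projT2 (cid (children_exists v))).2. Qed.

Lemma size_children_le1 v : ~ branching v -> (size (children v) <= 1)%N.
Proof.
move=> nbr; have := children_uniq v; have := mem_children v.
case: (children v) => [|x [|y l]] //= cP /and3P [xyl _ _]; exfalso; apply: nbr.
have [a [sa ta]] := (cP x).1 (mem_head _ _).
have [b [sb tb]] : exists b, s b = v /\ t b = y by apply/cP; rewrite !inE eqxx orbT.
by exists a, b; rewrite ta tb; do 2!split=> //; move=> xy; move: xyl; rewrite xy !inE eqxx.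
Qed.

Fixpoint stage_seq i : seq {classic V} :=
  if i is i'.+1 then undup (flatten (map children (stage_seq i'))) else [:: r].

Lemma stage_seq_uniq i : uniq (stage_seq i).
Proof. by case: i => [|i] //=; apply: undup_uniq. Qed.

Lemma mem_stage_seq i w : w \in stage_seq i <-> stage s t r i w.
Proof.
elim: i w => [|i IH] w /=.
  rewrite inE; split=> [/eqP ->|[[|a p] [rw pi]]] //; first by exists [::].
  by rewrite -rw.
rewrite mem_undup; split.
  case/(@flatten_mapP _ _ children) => x /IH [q [rq qi]] /mem_children [a [sa ta]].
  by exists (rcons q a); rewrite is_path_rcons size_rcons sa qi.
move=> [p []]; case/lastP: p => [//|q a]; rewrite is_path_rcons size_rcons => [[rq ta] [qi]].
apply/(@flatten_mapP _ _ children); exists (s a); first by apply/IH; exists q.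
by apply/mem_children; exists a.
Qed.

Lemma size_stage_seqS i : (forall w, stage s t r i w -> ~ branching w) ->
  (size (stage_seq i.+1) <= size (stage_seq i))%N.
Proof.
move=> nbr; apply: leq_trans (size_undup _) _.
rewrite size_flatten /shape -map_comp sumnE big_map -sum1_size !big_seq leq_sum // => w.
by move=> /mem_stage_seq /nbr; apply: size_children_le1.
Qed.

Definition branches_deeply x :=
  forall N, exists w p, path x p w /\ (N <= size p)%N /\ branching w.

Lemma barren_of_not_branches_deeply : ~ branches_deeply r -> barren s t r.
Proof.
move=> shallow.
have [D D_nbr] : exists D, forall w p, path r p w -> (D <= size p)%N -> ~ branching w.
  apply: contrapT => deep; apply: shallow => N; apply: contrapT => noN; apply: deep.
  by exists N => w p rp Np brw; apply: noN; exists w, p.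
exists (fun i => size (stage_seq i)); split.
  by move=> i; exact: (@has_card_uniq {classic V} _ _ r (stage_seq_uniq i) (mem_stage_seq i)).
apply: (nonincreasing_eventually_constant (D := D)) => i Di.
by apply: size_stage_seqS => w [p [rp pi]]; apply: D_nbr rp _; rewrite pi.
Qed.

Lemma branches_deeply_child x :
  branches_deeply x -> exists a, s a = x /\ branches_deeply (t a).
Proof.
move=> deep; apply: contrapT => no_child.
have bound c : exists N, c \in children x ->
    forall w p, path c p w -> (N <= size p)%N -> ~ branching w.
  apply: contrapT => unbounded; apply: no_child.
  have /(mem_children x c) [a [sa ta]] : c \in children x.
    by apply: contrapT => cx; apply: unbounded; exists 0%N.
  exists a; split => // N; apply: contrapT => noN; apply: unbounded.
  by exists N => _ w p cp Np brw; apply: noN; exists w, p; rewrite ta.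
pose N c := projT1 (cid (bound c)).
have [w [p [xp [Mp brw]]]] := deep (\max_(c <- children x) N c).+1.
case: p xp Mp => [|a p] //= [sa tp] Mp.
have tax : t a \in children x by apply/mem_children; exists a.
apply: (projT2 (cid (bound (t a))) tax w p tp _ brw).
by rewrite ltnS in Mp; apply: leq_trans Mp; apply: leq_bigmax_seq.
Qed.

End LocallyFiniteTree.

Section DeeplyBranchingTree.
Variables (V A : Type) (s t : A -> V) (r : V).
Hypotheses (r_root : is_root s t r) (s_lf : locally_finite s t)
  (r_deep : branches_deeply s t r).
Local Notation path := (is_path s t).
Local Notation descendant := (descendant s t).
Local Notation branches_deeply := (branches_deeply s t).

(* The implication sits under the existential so that [next_arrow] is total. *)
Lemma next_arrow_exists x : exists a, branches_deeply x -> s a = x /\ branches_deeply (t a).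
Proof.
have [deep|shallow] := pselect (branches_deeply x).
  by have [a ax] := branches_deeply_child s_lf deep; exists a => _.
by have [_ [_ [_ [_ [a _]]]]] := r_deep 0%N; exists a => /shallow.
Qed.

Definition next_arrow x := projT1 (cid (next_arrow_exists x)).

Definition ray k := iter k (t \o next_arrow) r.

Definition ray_arrow k := next_arrow (ray k).

Lemma ray_deep k : branches_deeply (ray k).
Proof.
elim: k => [|k IH]; first exact: r_deep.
exact: (projT2 (cid (next_arrow_exists (ray k))) IH).2.
Qed.

Lemma ray_arrow_source k : s (ray_arrow k) = ray k.
Proof. exact: (projT2 (cid (next_arrow_exists _)) (ray_deep k)).1. Qed.

Lemma is_path_ray k : path r (mkseq ray_arrow k) (ray k).
Proof. by elim: k => [|k IH] //; rewrite mkseqS is_path_rcons ray_arrow_source. Qed.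

Lemma ray_branching K : exists k, (K <= k)%N /\ branching s t (ray k).
Proof.
apply: contrapT => no_branch.
have straight p m : (K <= m)%N -> forall w, path (ray m) p w -> w = ray (m + size p).
  elim: p m => [|a p IH] m Km w /=; first by rewrite addn0.
  move=> [sa tp]; have ta : t a = ray m.+1.
    apply: contrapT => ta; apply: no_branch; exists m; split => //.
    by exists a, (ray_arrow m); rewrite ray_arrow_source.
  by rewrite addnS -addSn; apply: IH (leqW Km) _ _; rewrite -ta.
have [w [p [Kp [_ brw]]]] := ray_deep K 0%N.
by apply: no_branch; exists (K + size p); rewrite leq_addr -(straight _ _ (leqnn K) _ Kp).
Qed.

Definition off_ray c := exists k b, s b = ray k /\ t b = c /\ c <> ray k.+1.

Lemma off_ray_deep N : exists k b, (N <= k)%N /\ s b = ray k /\ t b <> ray k.+1.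
Proof.
have [k [Nk [a [b [sa [sb tab]]]]]] := ray_branching N.
have [ta|ta] := pselect (t a = ray k.+1); last by exists k, a.
by exists k, b; split=> //; split=> // tb; apply: tab; rewrite ta tb.
Qed.

Lemma off_ray_path k b : s b = ray k -> path r (rcons (mkseq ray_arrow k) b) (t b).
Proof. by move=> sb; rewrite is_path_rcons sb; split => //; apply: is_path_ray. Qed.

Lemma off_ray_antichain u c : off_ray u -> off_ray c -> descendant c u -> u = c.
Proof.
move=> [k' [b' [sb' [tb' _]]]] [k [b [sb [tb cray]]]] [[|a q] cq]; first by [].
have cq' : path (t b) (a :: q) (t b') by rewrite tb tb'.
have paths := root_path_uniq r_root (off_ray_path sb') (is_path_cat (off_ray_path sb) cq').
have := congr1 size paths.
rewrite size_cat !size_rcons !size_mkseq /= addnS => -[kk'].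
have kk : (k < k')%N by rewrite kk' leq_addr.
move/(congr1 (nth b ^~ k)): paths.
rewrite nth_rcons size_mkseq kk nth_mkseq // nth_cat size_rcons size_mkseq ltnSn.
by rewrite nth_rcons size_mkseq ltnn eqxx => ab; case: cray; rewrite -tb -ab.
Qed.

Lemma off_ray_unbounded N : exists w p, off_ray w /\ path r p w /\ (N < size p)%N.
Proof.
have [k [b [Nk [sb tb]]]] := off_ray_deep N.
exists (t b), (rcons (mkseq ray_arrow k) b); split; first by exists k, b.
by rewrite size_rcons size_mkseq ltnS; split=> //; apply: off_ray_path.
Qed.

End DeeplyBranchingTree.

Section BoundedSupportRep.
Variables (V A : Type) (s t : A -> V) (r : V) (K : fieldType).
Local Notation path := (is_path s t).
Local Notation descendant := (descendant s t).

Definition bounded_support v (f : V -> K^o) :=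
  (forall x, f x != 0 -> descendant v x) /\
  exists N, forall x p, f x != 0 -> path r p x -> (size p <= N)%N.

Lemma bounded_support0 v : bounded_support v 0.
Proof. by split=> [x|]; [rewrite eqxx|exists 0%N => x p; rewrite eqxx]. Qed.

Lemma bounded_supportP v a f g :
  bounded_support v f -> bounded_support v g -> bounded_support v (a *: f + g).
Proof.
move=> [fv [Nf fN]] [gv [Ng gN]].
have fg_neq0 x : (a *: f + g) x != 0 -> f x != 0 \/ g x != 0.
  by have [fx0|] := eqVneq (f x) 0; [rewrite !fctE /= fx0 scaler0 add0r; right|left].
split=> [x /fg_neq0 [/fv|/gv] //|]; exists (maxn Nf Ng) => x p /fg_neq0 [fx|gx] rp.
- exact: leq_trans (fN _ _ fx rp) (leq_maxl _ _).
- exact: leq_trans (gN _ _ gx rp) (leq_maxr _ _).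
Qed.

Definition bounded_supportb v : {pred V -> K^o} := fun f => `[< bounded_support v f >].

Lemma bounded_supportb_closed v : subsemimod_closed (bounded_supportb v).
Proof.
split; [split|] => [|f g /asboolP fv /asboolP gv|a f /asboolP fv]; apply/asboolP.
- exact: bounded_support0.
- by rewrite -[f]scale1r; apply: bounded_supportP.
- by rewrite -[a *: f]addr0; apply: bounded_supportP (bounded_support0 v).
Qed.

HB.instance Definition _ v :=
  GRing.isSubmodClosed.Build _ _ (bounded_supportb v) (bounded_supportb_closed v).

Record bfun v := BFun { bfval : V -> K^o; bfvalP : bounded_supportb v bfval }.
HB.instance Definition _ v := [isSub for (@bfval v)].
HB.instance Definition _ v := [Choice of bfun v by <:].
HB.instance Definition _ v := [SubChoice_isSubLmodule of bfun v by <:].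

Lemma bfval_inj v : injective (@bfval v). Proof. exact: val_inj. Qed.

Lemma bounded_support_bfval v (f : bfun v) : bounded_support v (bfval f).
Proof. exact/asboolP/bfvalP. Qed.

Definition restrict w (f : V -> K^o) x := if pselect (descendant w x) then f x else 0.

Lemma restrict_bounded v w f : bounded_support v f -> bounded_support w (restrict w f).
Proof.
move=> [_ [N fN]]; rewrite /restrict; split=> [x|].
  by case: pselect => // nwx; rewrite eqxx.
by exists N => x p; case: pselect => wx; [exact: fN|rewrite eqxx].
Qed.

Definition bfres v w (f : bfun v) : bfun w :=
  BFun (asboolT (restrict_bounded w (bounded_support_bfval f))).

Lemma bfres_linear v w : linear (@bfres v w).
Proof.
move=> a f g; apply: bfval_inj; apply/funext => x; rewrite /= /restrict !fctE.
by case: pselect => // nwx; rewrite scaler0 addr0.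
Qed.

Definition bounded_rep : rep s t K :=
  @Rep _ _ s t K bfun (fun a => mk_linear (@bfres_linear (s a) (t a))).

End BoundedSupportRep.

Section BoundedRepSplit.
Variables (V A : Type) (s t : A -> V) (r : V) (K : fieldType).
Hypotheses (r_root : is_root s t r) (s_lf : locally_finite s t).
Local Notation path := (is_path s t).
Local Notation descendant := (descendant s t).
Local Notation bfun := (bfun s t r K).
Local Notation out v := {a : A | s a = v}.

Lemma out_arrow_eq v (a b : out v) x :
  descendant (t (sval a)) x -> descendant (t (sval b)) x -> a = b.
Proof.
case: a b => [a sa] [b sb] /= ax bx.
have ab := arrow_eq_of_descendant r_root (etrans sa (esym sb)) ax bx.
by subst b; congr exist; apply: Prop_irrelevance.
Qed.

Definition glue v (F : forall a : out v, bfun (t (sval a))) (x : V) : K^o :=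
  if pselect (exists a : out v, descendant (t (sval a)) x) is left ax
  then bfval (F (projT1 (cid ax))) x else 0.

Lemma glue_eq v F (a : out v) x : descendant (t (sval a)) x -> glue F x = bfval (F a) x.
Proof.
move=> ax; rewrite /glue; case: pselect => [ax'|]; last by case; exists a.
by case: (cid ax') => b bx /=; rewrite (out_arrow_eq bx ax).
Qed.

Lemma glue_bounded v F : bounded_support s t r v (@glue v F).
Proof.
split=> [x|].
  rewrite /glue; case: pselect => [ax _|_]; last by rewrite eqxx.
  have [a ax'] := ax.
  by rewrite -(svalP a); apply: descendant_arrow ax'.
have bound c : exists N, forall a : out v, t (sval a) = c ->
    forall x p, bfval (F a) x != 0 -> path r p x -> (size p <= N)%N.
  have [[a0 ta0]|no_arrow] := pselect (exists a : out v, t (sval a) = c); last first.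
    by exists 0%N => a ta; case: no_arrow; exists a.
  have [_ [N aN]] := bounded_support_bfval (F a0).
  exists N => a ta; rewrite (@out_arrow_eq v a a0 c) ?ta ?ta0 //; exact: descendant_refl.
exists (\max_(c <- children s_lf v) projT1 (cid (bound c))) => x p.
rewrite /glue; case: pselect => [ax|_]; last by rewrite eqxx.
case: (cid ax) => a /= ax' Fax rp.
have ta : t (sval a) \in children s_lf v.
  by apply/mem_children; exists (sval a); rewrite (svalP a).
apply: leq_trans (projT2 (cid (bound _)) a erefl x p Fax rp) _.
exact: leq_bigmax_seq.
Qed.

Lemma bounded_rep_split v : out_split_epi (bounded_rep s t r K) v.
Proof.
exists (fun F => BFun (asboolT (glue_bounded F))); split.
  move=> c F G; apply: bfval_inj; apply/funext => x; rewrite /= !fctE /glue.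
  by case: pselect => // _; rewrite scaler0 addr0.
move=> F [a sa] /=; subst v; rewrite /eq_rect_r /=.
rewrite (Prop_irrelevance (Logic.eq_sym _) (erefl (s a))) /=.
apply: bfval_inj; apply/funext => x; rewrite /= /restrict.
case: pselect => [ax|nax] /=; first exact: (@glue_eq (s a) F (exist _ a erefl) x ax).
have [Fsupp _] := bounded_support_bfval (F (exist _ a erefl)).
by have [->//|/Fsupp] := eqVneq (bfval (F (exist _ a erefl)) x) 0.
Qed.

End BoundedRepSplit.

Section BoundedRepNotInjective.
Variables (V A : Type) (s t : A -> V) (r : V) (K : fieldType).
Hypothesis r_root : is_root s t r.
Variable S : V -> Prop.
Hypotheses (S_antichain : forall u c, S u -> S c -> descendant s t c u -> u = c)
  (S_unbounded : forall N, exists w p, S w /\ is_path s t r p w /\ (N < size p)%N).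
Local Notation path := (is_path s t).
Local Notation descendant := (descendant s t).
Local Notation X := (bounded_rep s t r K).

Definition below_S w := exists c, S c /\ descendant c w.

Lemma below_S_target a : below_S (s a) -> below_S (t a).
Proof.
by move=> [c [Sc ca]]; exists c; split=> //; apply: descendant_trans ca (descendant_target _ _ a).
Qed.

Lemma below_S_target_notin a : below_S (s a) -> ~ S (t a).
Proof.
move=> [c [Sc ca]] Sta; apply: (not_descendant_source r_root (a := a)).
by rewrite (S_antichain Sta Sc (descendant_trans ca (descendant_target _ _ a))).
Qed.

Definition below_S_ind w : K := if pselect (below_S w) then 1 else 0.

Lemma mulr_linear (c : K) : linear (fun x : K^o => c * x : K^o).
Proof. by move=> a x y; rewrite mulrDr mulrCA. Qed.

(* [embed] puts [source_rep] into the first factor of [K^2] below [S] and into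
   the second elsewhere; it is a morphism because the region below [S] is closed
   under arrows and [target_rep] kills the second factor. *)
Definition source_rep : rep s t K :=
  @Rep _ _ s t K (fun _ => K^o) (fun a => mk_linear (mulr_linear (below_S_ind (s a)))).

Lemma fst_linear : linear (fun z : K^o * K^o => (z.1, 0) : K^o * K^o).
Proof.
move=> a [x1 x2] [y1 y2] /=.
by rewrite -[RHS]/(a *: x1 + y1, a *: (0 : K^o) + 0) scaler0 addr0.
Qed.

Definition target_rep : rep s t K :=
  @Rep _ _ s t K (fun _ => (K^o * K^o)%type) (fun a => mk_linear fst_linear).

Lemma embed_linear w :
  linear (fun c : K^o => (c * below_S_ind w, c * (1 - below_S_ind w)) : K^o * K^o).
Proof.
move=> a x y; set i := below_S_ind w.
by rewrite -[RHS]/(a * (x * i) + y * i, a * (x * (1 - i)) + y * (1 - i)) !mulrA -!mulrDl.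
Qed.

Definition embed w : {linear rep_mod source_rep w -> rep_mod target_rep w} :=
  mk_linear (embed_linear w).

Lemma embed_morph : is_rep_morph embed.
Proof.
move=> a y /=; rewrite /below_S_ind.
case: (pselect (below_S (s a))) => [sa|nsa]; last by rewrite !mul0r mulr0.
by case: pselect => [ta|/(_ (below_S_target sa))//]; rewrite subrr !mulr1 mul1r mulr0.
Qed.

Lemma embed_inj w : injective (embed w).
Proof.
move=> x y [] /=; rewrite /below_S_ind.
by case: pselect => bw; rewrite ?subrr ?subr0 !mulr1 // => _ /eqP; rewrite mulr0 eqxx.
Qed.

Definition S_delta w x : K^o := if pselect (S w /\ x = w) then 1 else 0.

Lemma S_delta_bounded w : bounded_support s t r w (S_delta w).
Proof.
rewrite /S_delta; have [p0 rp0] := root_path_exists r_root w.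
split=> [x|].
  by case: pselect => [[Sw xw] _|nS]; [rewrite xw; apply: descendant_refl|rewrite eqxx].
exists (size p0) => x p; case: pselect => [[Sw xw] _ rp|nS]; last by rewrite eqxx.
by rewrite xw in rp; rewrite (root_path_uniq r_root rp rp0).
Qed.

Lemma S_delta_map_linear w :
  linear (fun c : K^o => c *: (BFun (asboolT (S_delta_bounded w)) : rep_mod X w)).
Proof. by move=> a x y; rewrite scalerDl scalerA. Qed.

Definition S_delta_map w : {linear rep_mod source_rep w -> rep_mod X w} :=
  mk_linear (S_delta_map_linear w).

Lemma S_delta_map_morph : is_rep_morph S_delta_map.
Proof.
move=> a y; apply: bfval_inj; apply/funext => x; rewrite /= /restrict !fctE /=.
rewrite /below_S_ind /S_delta; case: (pselect (below_S (s a))) => [sa|nsa] /=.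
  case: (pselect (S (t a) /\ x = t a)) => [[Sta xta]|nSta].
    by case: (below_S_target_notin sa Sta).
  case: (pselect (descendant (t a) x)) => [tax|ntax]; last by rewrite scaler0.
  case: (pselect (S (s a) /\ x = s a)) => [[Ssa xsa]|nSsa]; last by rewrite !scaler0.
  by case: (not_descendant_source r_root (a := a)); rewrite -xsa.
rewrite mul0r scale0r; case: (pselect (descendant (t a) x)) => [tax|//].
case: (pselect (S (s a) /\ x = s a)) => [[Ssa xsa]|nSsa]; last by rewrite scaler0.
by case: nsa; exists (s a); split=> //; apply: descendant_refl.
Qed.

Lemma target_morph_path (h : forall v, {linear rep_mod target_rep v -> rep_mod X v}) :
  is_rep_morph h -> forall u p w, path u p w -> forall x, descendant w x ->
  bfval (h w (1, 0)) x = bfval (h u (1, 0)) x.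
Proof.
move=> h_morph u p; elim: p u => [|a p IH] u w /=; first by move=> ->.
move=> [<- tp] x wx; rewrite (IH _ _ tp x wx).
have := h_morph a (1, 0); rewrite [rep_map _ _ _]/= => ->.
by rewrite /= /restrict; case: pselect => // -[]; apply: descendant_trans wx; exists p.
Qed.

Lemma bounded_rep_not_injective : ~ rep_injective X.
Proof.
move=> X_inj.
have [h [h_morph h_ext]] := X_inj _ _ _ _ embed_morph embed_inj S_delta_map_morph.
have [_ [N hN]] := bounded_support_bfval (h r (1, 0)).
have [w [p [Sw [rp Np]]]] := S_unbounded N.
have embed1 : embed w 1 = (1, 0).
  rewrite /= /below_S_ind; case: pselect => [bw|[]]; first by rewrite subrr mul1r mulr0.
  by exists w; split=> //; apply: descendant_refl.
have hw1 : bfval (h w (1, 0)) w = 1.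
  have := h_ext w 1; rewrite embed1 => ->.
  by rewrite /= /S_delta scale1r; case: pselect => // -[].
have hr1 : bfval (h r (1, 0)) w != 0.
  by rewrite -(target_morph_path h_morph rp (descendant_refl _ _ w)) hw1 oner_neq0.
by move: (hN w p hr1 rp); rewrite leqNgt Np.
Qed.

End BoundedRepNotInjective.

Theorem theorem5p3 (V A : Type) (s t : A -> V) (r : V) :
  is_root s t r -> ~ barren s t r -> locally_finite s t ->
  ~ source_injective_rep_quiver s t.
Proof.
move=> r_root not_barren s_lf si.
have r_deep : branches_deeply s t r.
  by apply: contrapT => shallow; apply/not_barren/barren_of_not_branches_deeply.
apply: (bounded_rep_not_injective (K := rat) r_root (S := off_ray s_lf r_deep)).
- exact: off_ray_antichain.
- exact: off_ray_unbounded.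
apply/si; split => v; first exact: lmod_field_injective.
exact: bounded_rep_split.
Qed.
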